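(* In the setting of the context: (i) if $A$ is any frontier, then $\sum_{\mathbf{w}\in A}\Pr_{\theta,\phi}(\mathbf{w}\mid\mathbf{z}_{\mathrm{pre}})=1$. (ii) Run top-$k$ constrained beam search ($k$-CBS) with beam width $B$; let $F$ be the set of continuations $\mathbf{x}$ of the output pairs $(\mathbf{z}_{\mathrm{pre}}\Vert\mathbf{x},\ell)\in C_T$, and let $R_{\mathrm{prune}}$ be the set of partial continuations $\mathbf{u}$ (of lengths $t<T$) such that a pair $(\mathbf{z}_{\mathrm{pre}}\Vert\mathbf{u},\ell)$ was in $C_t$ but was removed at step $t$ (either because its history ends in EOS or because it was not among the $B$ retained pairs). Then $F\cup R_{\mathrm{prune}}$ is a frontier, and $$\sum_{\mathbf{x}\in F}\Pr_{\theta,\phi}(\mathbf{x}\mid\mathbf{z}_{\mathrm{pre}})+\sum_{\mathbf{u}\in R_{\mathrm{prune}}}\Pr_{\theta,\phi}(\mathbf{u}\mid\mathbf{z}_{\mathrm{pre}})=1.$$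
   Context: Let $\mathbb{V}$ be a finite vocabulary containing a designated end-of-sequence token EOS. A language model $\theta$ assigns to every finite token sequence (history) $\mathbf{h}$ a probability distribution $\Pr_\theta(\cdot\mid\mathbf{h})$ on $\mathbb{V}$ with $\Pr_\theta(v\mid\mathbf{h})>0$ for all $v$. For an integer $k\ge1$ and a history $\mathbf{h}$, let $S(\mathbf{h})\subseteq\mathbb{V}$ be the set of $k$ tokens with the largest values of $\Pr_\theta(\cdot\mid\mathbf{h})$ (ties broken by a fixed deterministic rule). The top-$k$ decoding distribution is $\Pr_{\theta,\phi}(v\mid\mathbf{h})=\Pr_\theta(v\mid\mathbf{h})/\sum_{u\in S(\mathbf{h})}\Pr_\theta(u\mid\mathbf{h})$ for $v\in S(\mathbf{h})$ and $0$ otherwise. Fix a prefix $\mathbf{z}_{\mathrm{pre}}$ and $T\ge1$. For a partial continuation $\mathbf{u}=(u_1,\dots,u_t)$, $0\le t\le T$, $\Pr_{\theta,\phi}(\mathbf{u}\mid\mathbf{z}_{\mathrm{pre}})=\prod_{s=1}^t\Pr_{\theta,\phi}(u_s\mid\mathbf{z}_{\mathrm{pre}}\Vert u_{1:s-1})$ ($\Vert$ is concatenation). Call $\mathbf{u}$ a node of the top-$k$ tree if $u_s\in S(\mathbf{z}_{\mathrm{pre}}\Vert u_{1:s-1})$ for all $s\le t$. A frontier is a set $A$ of nodes (of lengths at most $T$) such that no element of $A$ is a proper initial segment of another element of $A$, and every node of length $T$ has exactly one element of $A$ as an initial segment. $k$-CBS with beam width $B$: set $L_0=\{(\mathbf{z}_{\mathrm{pre}},0)\}$.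 For $t=1,\dots,T$: let $C_t=\{(\mathbf{h}\Vert v,\ \ell+\log\Pr_{\theta,\phi}(v\mid\mathbf{h})):(\mathbf{h},\ell)\in L_{t-1},\ v\in S(\mathbf{h})\}$. If $t=T$, output $C_T$. If $t<T$, delete from $C_t$ every pair whose history ends in EOS, and let $L_t$ be the (at most) $B$ pairs of $C_t$ with the largest second coordinate (deterministic tie-breaking). *)

From HB Require Import structures.
From mathcomp Require Import all_boot all_order all_algebra.
From mathcomp Require Import reals exp.
Set Implicit Arguments. Unset Strict Implicit. Unset Printing Implicit Defensive.
Import Order.TTheory GRing.Theory Num.Theory.
Local Open Scope ring_scope.

Section TopK.
Variables (V : finType) (R : realType).

Definition is_lm (p : seq V -> V -> R) :=
  forall h, (forall v, 0 < p h v) /\ \sum_(v : V) p h v = 1.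

(* S is a top-k selection for p: S h consists of k tokens whose probabilities
   are at least those of all the other tokens (ties broken by S itself, which is
   an arbitrary but fixed deterministic rule). *)
Definition is_topk_sel (k : nat) (p : seq V -> V -> R) (S : seq V -> {set V}) :=
  forall h, #|S h| = k /\
    (forall v u, v \in S h -> u \notin S h -> p h u <= p h v).

Definition topk_dist (p : seq V -> V -> R) (S : seq V -> {set V})
    (h : seq V) (v : V) : R :=
  if v \in S h then p h v / \sum_(u in S h) p h u else 0.

(* Pr_{theta,phi}(u | zpre) ; [eos] is only a (irrelevant) default for nth *)
Definition cont_prob (eos : V) p S (zpre u : seq V) : R :=
  \prod_(s < size u) topk_dist p S (zpre ++ take s u) (nth eos u s).

Definition is_node (eos : V) (S : seq V -> {set V}) (zpre u : seq V) : Prop :=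
  forall s, (s < size u)%N -> nth eos u s \in S (zpre ++ take s u).

Definition is_frontier (eos : V) S (zpre : seq V) (T : nat) (A : seq (seq V)) :=
  [/\ uniq A,
      (forall w, w \in A -> is_node eos S zpre w /\ (size w <= T)%N),
      (forall w1 w2, w1 \in A -> w2 \in A -> ~ (prefix w1 w2 /\ w1 != w2)) &
      (forall u, is_node eos S zpre u -> size u = T ->
         count (fun w => prefix w u) A = 1%N)].

Definition is_beam_sel (B : nat) (sel : seq (seq V * R) -> seq (seq V * R)) :=
  forall c, uniq c ->
    [/\ uniq (sel c), {subset sel c <= c}, size (sel c) = minn B (size c) &
        forall x y, x \in sel c -> y \in c -> y \notin sel c -> y.2 <= x.2].

Definition ends_eos (eos : V) (h : seq V) : bool :=
  if h is a :: h' then last a h' == eos else false.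

Definition expand p S (L : seq (seq V * R)) : seq (seq V * R) :=
  [seq (rcons x.1 v, x.2 + ln (topk_dist p S x.1 v)) | x <- L, v <- enum (S x.1)].

(* (C_t, L_t) for t >= 0 (C_0 is unused, set to [::]) *)
Fixpoint kcbs (eos : V) p S sel (zpre : seq V) (t : nat)
  : seq (seq V * R) * seq (seq V * R) :=
  match t with
  | 0 => ([::], [:: (zpre, 0)])
  | t'.+1 =>
      let C := expand p S (kcbs eos p S sel zpre t').2 in
      (C, sel [seq x <- C | ~~ ends_eos eos x.1])
  end.

Definition kcbs_C eos p S sel zpre t := (kcbs eos p S sel zpre t).1.
Definition kcbs_L eos p S sel zpre t := (kcbs eos p S sel zpre t).2.

Definition kcbs_F eos p S sel (zpre : seq V) (T : nat) : seq (seq V) :=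
  [seq drop (size zpre) x.1 | x <- kcbs_C eos p S sel zpre T].

Definition kcbs_Rprune eos p S sel (zpre : seq V) (T : nat) : seq (seq V) :=
  flatten [seq [seq drop (size zpre) x.1 |
                 x <- kcbs_C eos p S sel zpre t
                 & x \notin kcbs_L eos p S sel zpre t] | t <- iota 1 T.-1].

End TopK.

(* (i) Summing the probabilities of all length-n extensions of w gives the
   probability of w, because every top-k conditional distribution sums to 1.
   Non-nodes have probability 0 and every length-T node extends exactly one
   element of a frontier A, so the sum over A regroups the total mass 1 of the
   length-T continuations.
   (ii) By induction on t, the continuations in C_(t+1) are exactly the one-token
   top-k extensions of those in L_t, and L_(t+1) is contained in C_(t+1).  Along
   a length-T node u, the times t < T at which the length-t prefix of u is in L_t
   therefore form an initial segment [0, t0), and the only prefix of u in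
   F ++ R_prune is the one of length t0: pruned at step t0 if t0 < T, output if
   t0 = T.  So F ++ R_prune is a frontier and (i) applies. *)

From HB Require Import structures.
From mathcomp Require Import all_boot all_order all_algebra.
From mathcomp Require Import reals exp.
Import Order.TTheory GRing.Theory Num.Theory.
Local Open Scope ring_scope.

Set Implicit Arguments.
Unset Strict Implicit.
Unset Printing Implicit Defensive.

Fixpoint words (V : finType) (n : nat) : seq (seq V) :=
  if n is n'.+1 then [seq v :: w | v <- enum V, w <- words V n'] else [:: [::]].

Lemma size_words (V : finType) n u : u \in words V n -> size u = n.
Proof.
elim: n u => [|n IHn] u /=; first by rewrite inE => /eqP->.
by case/allpairsPdep=> v [w [_ /IHn <- ->]].
Qed.

Lemma sum_words_prefix (V : finType) (M : nmodType) (f : seq V -> M) w n :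
  (size w <= n)%N ->
  \sum_(u <- words V n | prefix w u) f u = \sum_(u <- words V (n - size w)) f (w ++ u).
Proof.
elim: w n f => [|a w IHw] n f /=; first by rewrite subn0 => _; apply: eq_bigl => -[].
case: n => [|n] //; rewrite ltnS => le_wn.
rewrite big_mkcond big_allpairs_dep /= (bigD1_seq a) ?mem_enum ?enum_uniq //=.
rewrite [X in _ + X]big1_seq ?addr0 => [|v /andP[neq_va _]]; last first.
  by apply: big1 => u _; rewrite eq_sym (negbTE neq_va).
by rewrite eqxx -big_mkcond (IHw _ (fun u => f (a :: u))).
Qed.

Lemma uniq_flatten_graded (T I : eqType) (deg : T -> I) (g : I -> seq T) s :
  uniq s -> (forall i, i \in s -> uniq (g i) /\ {in g i, forall x, deg x = i}) ->
  uniq (flatten [seq g i | i <- s]).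
Proof.
elim: s => [|i s IHs] //= /andP[i_notin_s uniq_s] gP.
have [uniq_gi deg_gi] := gP i (mem_head i s).
have gP_tail j : j \in s -> uniq (g j) /\ {in g j, forall x, deg x = j}.
  by move=> js; apply: gP; rewrite inE js orbT.
rewrite cat_uniq uniq_gi IHs // andbT.
apply/hasPn => x /flattenP[_ /mapP[j js ->] xgj]; apply/negP => /deg_gi deg_x.
have [_ deg_gj] := gP_tail j js.
by move: i_notin_s; rewrite -deg_x (deg_gj x xgj) js.
Qed.

Lemma count_prefix (T : eqType) (A : seq (seq T)) (u : seq T) : uniq A ->
  count (fun w => prefix w u) A = (\sum_(0 <= t < (size u).+1) (take t u \in A))%N.
Proof.
move=> uniq_A; set P := [seq take t u | t <- index_iota 0 (size u).+1].
have uniq_P : uniq P.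
  rewrite map_inj_in_uniq ?iota_uniq // => t1 t2.
  rewrite !mem_index_iota !ltnS => /andP[_ le1] /andP[_ le2] /(congr1 size).
  by rewrite !size_takel.
have prefix_mem w : prefix w u = (w \in P).
  apply/idP/mapP => [|[t _ ->]]; last exact: prefix_take.
  rewrite prefixE => /eqP eq_w; exists (size w); last by [].
  by rewrite mem_index_iota ltnS -eq_w size_take geq_minr.
rewrite (eq_count prefix_mem) -size_filter.
rewrite (perm_size (uniq_perm (filter_uniq _ uniq_A) (filter_uniq (mem A) uniq_P) _)).
  by rewrite size_filter count_map -sum1_count big_mkcond.
by move=> w; rewrite !mem_filter andbC.
Qed.

Lemma uniq_map_inj_in (T U : eqType) (f : T -> U) s :
  uniq (map f s) -> {in s &, injective f}.
Proof.
elim: s => [|a s IHs] //= /andP[fa_notin uniq_fs] x y.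
rewrite !inE => /predU1P[-> | xs] /predU1P[-> | ys] // fxy.
- by move: fa_notin; rewrite fxy map_f.
- by move: fa_notin; rewrite -fxy map_f.
- exact: IHs.
Qed.

Lemma topk_dist_sum1 (V : finType) (R : realType) (p : seq V -> V -> R) S h :
  (forall v, 0 < p h v) -> S h != set0 -> \sum_(v : V) topk_dist p S h v = 1.
Proof.
move=> p_gt0 /set0Pn[v0 v0S]; rewrite /topk_dist -big_mkcond /= -mulr_suml divff //.
rewrite (bigD1 v0) //= gt_eqF // ltr_pwDl //.
by apply: sumr_ge0 => v _; apply: ltW.
Qed.

Lemma topk_sel_neq0 (V : finType) (R : realType) k (p : seq V -> V -> R) S h :
  (0 < k)%N -> is_topk_sel k p S -> S h != set0.
Proof. by move=> k_gt0 /(_ h)[card_Sh _]; rewrite -card_gt0 card_Sh. Qed.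

Section ContProb.
Variables (V : finType) (R : realType) (eos : V) (p : seq V -> V -> R).
Variables (S : seq V -> {set V}) (zpre : seq V).
Hypothesis dist_sum1 : forall h, \sum_(v : V) topk_dist p S h v = 1.

Local Notation P := (cont_prob eos p S zpre).

Lemma cont_prob_nil : P [::] = 1.
Proof. by rewrite /cont_prob big_ord0. Qed.

Lemma cont_prob_rcons w v : P (rcons w v) = P w * topk_dist p S (zpre ++ w) v.
Proof.
rewrite /cont_prob size_rcons big_ord_recr /= nth_rcons ltnn eqxx.
rewrite -cats1 take_size_cat //; congr (_ * _); apply: eq_bigr => i _.
by rewrite nth_cat (ltn_ord i) takel_cat // ltnW.
Qed.

Lemma sum_cont_prob_cat w n : \sum_(u <- words V n) P (w ++ u) = P w.
Proof.
elim: n w => [|n IHn] w /=; first by rewrite big_seq1 cats0.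
rewrite big_allpairs_dep /= big_enum -[RHS]mulr1 -(dist_sum1 (zpre ++ w)) mulr_sumr /=.
apply: eq_bigr => v _; under eq_bigr do rewrite -cat_rcons.
by rewrite IHn cont_prob_rcons.
Qed.

Lemma node_of_cont_prob_neq0 u : P u != 0 -> is_node eos S zpre u.
Proof.
move=> Pu_neq0 s lt_s; apply: contraNT Pu_neq0 => s_notin_S.
by rewrite /cont_prob (bigD1 (Ordinal lt_s)) //= /topk_dist (negbTE s_notin_S) mul0r.
Qed.

Lemma frontier_sum1 T A : is_frontier eos S zpre T A -> \sum_(w <- A) P w = 1.
Proof.
case=> uniq_A A_nodes _ count_A.
have -> : 1 = \sum_(u <- words V T) \sum_(w <- A | prefix w u) P u.
  rewrite -cont_prob_nil -(sum_cont_prob_cat [::] T); apply: eq_big_seq => u uT.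
  have [-> | Pu_neq0] := eqVneq (P u) 0; first by rewrite big1.
  rewrite big_const_seq count_A ?(size_words uT) //= ?addr0 //.
  exact: node_of_cont_prob_neq0.
rewrite (exchange_big_dep xpredT) //=; apply: eq_big_seq => w wA.
rewrite sum_words_prefix ?sum_cont_prob_cat //.
by case: (A_nodes w wA).
Qed.

End ContProb.

Section Nodes.
Variables (V : finType) (eos : V) (S : seq V -> {set V}) (zpre : seq V).

Lemma node_rcons w v :
  is_node eos S zpre w -> v \in S (zpre ++ w) -> is_node eos S zpre (rcons w v).
Proof.
move=> w_node vS s; rewrite size_rcons ltnS leq_eqVlt => /predU1P[-> | lt_sw].
  by rewrite nth_rcons ltnn eqxx -cats1 take_size_cat.
by rewrite nth_rcons lt_sw -cats1 takel_cat ?w_node // ltnW.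
Qed.

Lemma node_take n u : is_node eos S zpre u -> is_node eos S zpre (take n u).
Proof.
move=> u_node s; rewrite size_take_min leq_min => /andP[lt_sn lt_su].
by rewrite nth_take // take_takel ?u_node // ltnW.
Qed.

End Nodes.

Section Beam.
Variables (V : finType) (R : realType) (eos : V) (p : seq V -> V -> R).
Variables (S : seq V -> {set V}) (B : nat) (sel : seq (seq V * R) -> seq (seq V * R)).
Variable zpre : seq V.
Hypothesis sel_beam : is_beam_sel B sel.

Definition cont (x : seq V * R) := drop (size zpre) x.1.

(* Distinct continuations are tracked because [sel] promises nothing on lists
   with duplicates. *)
Definition beam_pairs t (L : seq (seq V * R)) : Prop :=
  (forall x, x \in L ->
     [/\ x.1 = zpre ++ cont x, size (cont x) = t & is_node eos S zpre (cont x)])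
  /\ uniq (map cont L).

Lemma cont_rcons x v r : x.1 = zpre ++ cont x -> cont (rcons x.1 v, r) = rcons (cont x) v.
Proof. by move=> x_def; rewrite {1}/cont /= x_def rcons_cat drop_size_cat. Qed.

Lemma expand_beam_pairs t L : beam_pairs t L -> beam_pairs t.+1 (expand p S L).
Proof.
case=> L_pairs uniq_L; split.
  move=> _ /allpairsPdep[x [v [xL vS ->]]].
  have [x_def size_x x_node] := L_pairs x xL.
  rewrite (cont_rcons _ _ x_def) size_rcons size_x /= -rcons_cat -x_def.
  by split=> //; apply: node_rcons; rewrite // -x_def -mem_enum.
rewrite map_allpairs; apply: allpairs_uniq_dep.
- exact: map_uniq uniq_L.
- by move=> x _; apply: enum_uniq.
move=> _ _ /allpairsPdep[x1 [v1 [x1L _ ->]]] /allpairsPdep[x2 [v2 [x2L _ ->]]] /=.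
have [x1_def _ _] := L_pairs x1 x1L; have [x2_def _ _] := L_pairs x2 x2L.
rewrite (cont_rcons _ _ x1_def) (cont_rcons _ _ x2_def).
move=> /eqP; rewrite eqseq_rcons => /andP[/eqP eq_cont /eqP <-].
by rewrite (uniq_map_inj_in uniq_L x1L x2L eq_cont).
Qed.

Definition prune (C : seq (seq V * R)) := sel [seq x <- C | ~~ ends_eos eos x.1].

Lemma prune_spec C : uniq C -> uniq (prune C) /\ {subset prune C <= C}.
Proof.
move=> uniq_C.
have [uniq_sel sub_sel _ _] :=
  sel_beam (filter_uniq (fun x => ~~ ends_eos eos x.1) uniq_C).
by split=> // x /sub_sel; rewrite mem_filter => /andP[].
Qed.

Lemma prune_beam_pairs t C : beam_pairs t C -> beam_pairs t (prune C).
Proof.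
case=> C_pairs uniq_C; have [uniq_prune sub_C] := prune_spec (map_uniq uniq_C).
split=> [x /sub_C | ]; first exact: C_pairs.
rewrite map_inj_in_uniq // => x y /sub_C xC /sub_C yC; exact: (uniq_map_inj_in uniq_C).
Qed.

Local Notation C := (kcbs_C eos p S sel zpre).
Local Notation L := (kcbs_L eos p S sel zpre).

Lemma kcbs_L_beam_pairs t : beam_pairs t (L t).
Proof.
elim: t => [|t IHt].
  by split=> // x; rewrite inE => /eqP->; rewrite /cont drop_size cats0.
exact: prune_beam_pairs (expand_beam_pairs IHt).
Qed.

Lemma kcbs_C_beam_pairs t : beam_pairs t.+1 (C t.+1).
Proof. exact: expand_beam_pairs (kcbs_L_beam_pairs t). Qed.

Lemma kcbs_L_subset t : {subset L t.+1 <= C t.+1}.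
Proof. exact: (prune_spec (map_uniq (proj2 (kcbs_C_beam_pairs t)))).2. Qed.

Definition cand t := map cont (C t).
Definition beam t := map cont (L t).

Lemma beam0 : beam 0 = [:: [::]].
Proof. by rewrite /beam /= /cont drop_size. Qed.

Lemma cand_node t w : w \in cand t -> is_node eos S zpre w /\ size w = t.
Proof.
case: t => [|t] // /mapP[x xC ->].
by have [_ size_x x_node] := (kcbs_C_beam_pairs t).1 x xC.
Qed.

Lemma mem_cand t u : is_node eos S zpre u -> size u = t.+1 ->
  (u \in cand t.+1) = (take t u \in beam t).
Proof.
move=> u_node size_u; have [L_pairs _] := kcbs_L_beam_pairs t.
apply/mapP/mapP => [[_ /allpairsPdep[x [v [xL _ ->]]] ->] | [x xL take_u]].
  have [x_def size_x _] := L_pairs x xL.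
  by exists x; rewrite // (cont_rcons _ _ x_def) -cats1 take_size_cat.
have [x_def _ _] := L_pairs x xL; set v := nth eos u t.
exists (rcons x.1 v, x.2 + ln (topk_dist p S x.1 v)).
  apply/allpairsPdep; exists x, v; split=> //.
  by rewrite mem_enum x_def -take_u u_node ?size_u.
by rewrite (cont_rcons _ _ x_def) -take_u -take_nth ?size_u // -size_u take_size.
Qed.

Lemma beam_subset t : {subset beam t.+1 <= cand t.+1}.
Proof. by move=> _ /mapP[x xL ->]; apply/map_f/kcbs_L_subset. Qed.

Lemma take_mem_beam t w s : w \in beam t -> (s <= t)%N -> take s w \in beam s.
Proof.
elim: t w => [|t IHt] w w_beam.
  by rewrite leqn0 => /eqP->; rewrite take0 beam0 mem_head.
have w_cand := beam_subset w_beam; have [w_node size_w] := cand_node w_cand.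
rewrite leq_eqVlt ltnS => /predU1P[-> | le_st]; first by rewrite take_oversize ?size_w.
by rewrite -(take_takel _ le_st) IHt // -mem_cand.
Qed.

Definition pruned t := [seq cont x | x <- C t & x \notin L t].

Lemma mem_pruned t w : (w \in pruned t.+1) = (w \in cand t.+1) && (w \notin beam t.+1).
Proof.
have [_ uniq_C] := kcbs_C_beam_pairs t.
apply/mapP/andP => [[x] | [/mapP[x xC ->] w_notin]].
  rewrite mem_filter => /andP[x_notin xC] ->; split; first exact: map_f.
  apply/mapP => -[y yL eq_cont]; move: x_notin.
  by rewrite (uniq_map_inj_in uniq_C xC (kcbs_L_subset yL) eq_cont) yL.
exists x => //; rewrite mem_filter xC andbT; apply: contra w_notin; exact: map_f.
Qed.

Lemma uniq_pruned t : uniq (pruned t.+1).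
Proof. exact: subseq_uniq (map_subseq _ (filter_subseq _ _)) (kcbs_C_beam_pairs t).2. Qed.

Local Notation F := (kcbs_F eos p S sel zpre).
Local Notation Rprune := (kcbs_Rprune eos p S sel zpre).

Lemma mem_kcbs_F T w : (w \in F T) = (size w == T) && (w \in cand (size w)).
Proof.
apply/idP/andP => [w_cand | [/eqP-> //]].
by have [_ size_w] := cand_node w_cand; rewrite size_w.
Qed.

Lemma mem_kcbs_Rprune T w :
  (w \in Rprune T) = [&& (0 < size w < T)%N, w \in cand (size w) & w \notin beam (size w)].
Proof.
case: T => [|T]; first by rewrite ltn0 andbF.
apply/flattenP/and3P => [[_ /mapP[t t_in ->]] | [/andP[size_gt0 lt_wT] w_cand w_notin]].
  move: t_in; rewrite mem_iota add1n; case: t => [|t] // /andP[_ lt_tT].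
  rewrite mem_pruned => /andP[w_cand w_notin].
  by have [_ size_w] := cand_node w_cand; rewrite size_w.
exists (pruned (size w)); first by apply: map_f; rewrite mem_iota add1n size_gt0.
by rewrite -(prednK size_gt0) mem_pruned prednK // w_cand.
Qed.

Lemma mem_kcbs_frontier T w : (0 < T)%N ->
  (w \in F T ++ Rprune T) =
  [&& (0 < size w <= T)%N, w \in cand (size w) & (size w < T)%N ==> (w \notin beam (size w))].
Proof.
move=> T_gt0; rewrite mem_cat mem_kcbs_F mem_kcbs_Rprune.
by case: (ltngtP (size w) T) => [| | ->]; rewrite ?andbF ?andbT ?T_gt0 ?orbF.
Qed.

Lemma uniq_kcbs_frontier T : (0 < T)%N -> uniq (F T ++ Rprune T).
Proof.
case: T => [|T] // _; rewrite cat_uniq (kcbs_C_beam_pairs T).2 /=.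
apply/andP; split.
  apply/hasPn => w; rewrite mem_kcbs_Rprune => /andP[/andP[_ lt_wT] _].
  by apply/negP; rewrite mem_kcbs_F (ltn_eqF lt_wT).
have -> : Rprune T.+1 = flatten [seq pruned t | t <- iota 1 T] by [].
apply: (uniq_flatten_graded (deg := size)) => [|[|t] //]; first exact: iota_uniq.
split=> [|w]; first exact: uniq_pruned.
by rewrite mem_pruned => /andP[/cand_node[]].
Qed.

Definition kept T u t := (t < T)%N && (take t u \in beam t).

Lemma kept_succ T u t : kept T u t.+1 -> kept T u t.
Proof.
case/andP=> lt_tT take_beam; rewrite /kept ltnW //=.
by rewrite -(take_takel _ (leqnSn t)) (take_mem_beam take_beam).
Qed.

Lemma take_mem_kcbs_frontier T u t : is_node eos S zpre u -> size u = T -> (t < T)%N ->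
  (take t.+1 u \in F T ++ Rprune T) = kept T u t && ~~ kept T u t.+1.
Proof.
move=> u_node size_u lt_tT.
have size_take : size (take t.+1 u) = t.+1 by rewrite size_takel // size_u.
have T_gt0 : (0 < T)%N := leq_ltn_trans (leq0n t) lt_tT.
rewrite mem_kcbs_frontier // size_take lt_tT /=.
rewrite mem_cand ?take_takel ?size_take //; last exact: node_take.
by rewrite /kept lt_tT negb_and implybE.
Qed.

Lemma count_prefix_kcbs_frontier T u : is_node eos S zpre u -> size u = T -> (0 < T)%N ->
  count (fun w => prefix w u) (F T ++ Rprune T) = 1%N.
Proof.
move=> u_node size_u T_gt0.
have kept_step t : (~~ kept T u t <= ~~ kept T u t.+1)%N /\
    (kept T u t && ~~ kept T u t.+1 : nat) = (~~ kept T u t.+1 - ~~ kept T u t)%N.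
  by case: (kept T u t) (@kept_succ T u t); case: (kept T u t.+1) => // /(_ isT).
rewrite count_prefix ?uniq_kcbs_frontier // size_u big_nat_recl //.
rewrite take0 mem_kcbs_frontier //= add0n.
under eq_big_nat => t /andP[_ lt_tT] do rewrite take_mem_kcbs_frontier // (kept_step t).2.
rewrite telescope_sumn_in // => [|t _]; last exact: (kept_step t).1.
by rewrite /kept ltnn T_gt0 take0 beam0 mem_head.
Qed.

Lemma kcbs_frontier T : (0 < T)%N -> is_frontier eos S zpre T (F T ++ Rprune T).
Proof.
move=> T_gt0; split; first exact: uniq_kcbs_frontier.
- move=> w; rewrite mem_kcbs_frontier // => /and3P[/andP[_ le_wT] w_cand _].
  by have [w_node _] := cand_node w_cand.
- move=> w1 w2; rewrite !mem_kcbs_frontier // => /and3P[_ _ w1_notin].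
  move=> /and3P[/andP[_ le_w2T] w2_cand _] [pre_w12 neq_w12].
  have w1_def : take (size w1) w2 = w1 by apply/eqP; rewrite -prefixE.
  have lt_w12 : (size w1 < size w2)%N.
    by rewrite ltnNge; apply: contra neq_w12 => le_w21; rewrite -w1_def take_oversize.
  have [w2_node _] := cand_node w2_cand.
  move: w1_notin; rewrite (leq_trans lt_w12 le_w2T) /=; apply/negP/negbNE.
  case size_w2 : (size w2) lt_w12 w2_cand => [|t] //; rewrite ltnS => le_w1t w2_cand.
  by rewrite -{1}w1_def -(take_takel _ le_w1t) (@take_mem_beam t) // -mem_cand.
- by move=> u u_node size_u; apply: count_prefix_kcbs_frontier.
Qed.

End Beam.

Theorem lemma5 (V : finType) (R : realType) (eos : V)
  (p : seq V -> V -> R) (k : nat) (S : seq V -> {set V})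
  (B : nat) (sel : seq (seq V * R) -> seq (seq V * R))
  (zpre : seq V) (T : nat) :
  is_lm p -> (1 <= k)%N -> is_topk_sel k p S -> is_beam_sel B sel -> (1 <= T)%N ->
  (forall A : seq (seq V), is_frontier eos S zpre T A ->
     \sum_(w <- A) cont_prob eos p S zpre w = 1)
  /\
  (is_frontier eos S zpre T
     (kcbs_F eos p S sel zpre T ++ kcbs_Rprune eos p S sel zpre T)
   /\ \sum_(x <- kcbs_F eos p S sel zpre T) cont_prob eos p S zpre x
      + \sum_(u <- kcbs_Rprune eos p S sel zpre T) cont_prob eos p S zpre u = 1).
Proof.
move=> lm k_gt0 topk sel_beam T_gt0.
have dist_sum1 h : \sum_(v : V) topk_dist p S h v = 1.
  by apply: topk_dist_sum1; [case: (lm h) | exact: topk_sel_neq0 topk].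
have kcbs_is_frontier := kcbs_frontier eos p S zpre sel_beam T_gt0.
split=> [A A_frontier | ]; first exact: frontier_sum1 A_frontier.
by split=> //; rewrite -big_cat (frontier_sum1 dist_sum1 kcbs_is_frontier).
Qed.
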